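(* Let $n\ge 1$, $b_i>0$, $\alpha_i>0$ for $i=1,\dots,n$, and $g(t)=b_1e^{-\alpha_1 t}-\sum_{i=2}^n b_ie^{-\alpha_i t}$. Suppose that $$2(\alpha_1-\alpha_j)^2\ge\max_{1\le i\le n}(\alpha_i-\alpha_j)^2\quad\text{for all } j\ge 2.$$ Then $g\,\mathds{1}_{[0,\infty)}$ is nonnegative if and only if $g\,\mathds{1}_{[0,\infty)}$ is log-concave.
   Context: A function $f:\mathbb{R}\to\mathbb{R}_{\ge0}$ is log-concave if $f(\lambda x+(1-\lambda)y)\ge f(x)^\lambda f(y)^{1-\lambda}$ for all $x,y\in\mathbb{R}$ and $\lambda\in[0,1]$ (equivalently $\log f$ is concave as a function into $\mathbb{R}\cup\{-\infty\}$). *)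

From HB Require Import structures.
From mathcomp Require Import all_boot all_order all_algebra.
From mathcomp Require Import all_classical all_reals all_analysis.
Set Implicit Arguments. Unset Strict Implicit. Unset Printing Implicit Defensive.
Import Order.TTheory GRing.Theory Num.Theory.
Local Open Scope ring_scope.

(* f : R -> R_{>=0} is log-concave:
   f (l x + (1-l) y) >= f x ^ l * f y ^ (1-l) for all x y and l in [0,1],
   with the real power powR (convention 0 `^ 0 = 1). *)
Definition log_concave (R : realType) (f : R -> R) : Prop :=
  (forall x, 0 <= f x) /\
  forall x y l : R, 0 <= l -> l <= 1 ->
    (f x `^ l) * (f y `^ (1 - l)) <= f (l * x + (1 - l) * y).

Definition gfun (R : realType) (n : nat) (b a : nat -> R) (t : R) : R :=
  b 1%N * expR (- a 1%N * t) - \sum_(2 <= i < n.+1) b i * expR (- a i * t).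

Definition gind (R : realType) (n : nat) (b a : nat -> R) (t : R) : R :=
  if 0 <= t then gfun n b a t else 0.

(* Factor g(t) = e^{-a_1 t} u(t) with u(t) = b_1 - sum_{i>=2} b_i e^{(a_1 - a_i) t}.
   As a constant minus a nonnegative combination of exponentials, u is concave,
   so on the points where g is positive, log g = -a_1 t + log u is concave; the
   weighted AM-GM inequality turns this into the multiplicative form of
   log-concavity. *)
From HB Require Import structures.
From mathcomp Require Import all_boot all_order all_algebra.
From mathcomp Require Import all_classical all_reals all_analysis.
From mathcomp Require Import ring.
Import Order.TTheory GRing.Theory Num.Theory.
Local Open Scope ring_scope.

Section ConvexCombinations.
Variable R : realType.
Implicit Types l p q x y c : R.

Lemma expR_convex_comb l p q : 0 <= l -> l <= 1 ->
  expR (l * p + (1 - l) * q) <= l * expR p + (1 - l) * expR q.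
Proof.
by move=> l0 l1; have := @convex_expR R (Itv01 l0 l1) p q; rewrite !convRE.
Qed.

Lemma ln_concave_comb l p q : 0 <= l -> l <= 1 -> 0 < p -> 0 < q ->
  l * ln p + (1 - l) * ln q <= ln (l * p + (1 - l) * q).
Proof.
by move=> l0 l1 p0 q0; have := @concave_ln R (Itv01 l0 l1) p q p0 q0; rewrite !convRE.
Qed.

Lemma powR_weighted_AMGM l p q : 0 <= l -> l <= 1 -> 0 < p -> 0 < q ->
  p `^ l * q `^ (1 - l) <= l * p + (1 - l) * q.
Proof.
move=> l0 l1 p0 q0.
have comb_gt0 : 0 < l * p + (1 - l) * q.
  have [->|l_neq0] := eqVneq l 0; first by rewrite mul0r add0r subr0 mul1r.
  apply: ltr_pwDl; first by rewrite mulr_gt0 // lt_neqAle eq_sym l_neq0.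
  by rewrite mulr_ge0 ?subr_ge0 // ltW.
rewrite /powR (gt_eqF p0) (gt_eqF q0) -expRD -[leRHS]lnK ?posrE // ler_expR.
exact: ln_concave_comb.
Qed.

Lemma sum_expR_convex_comb (I : eqType) (r : seq I) (w k : I -> R) l x y :
  {in r, forall i, 0 <= w i} -> 0 <= l -> l <= 1 ->
  \sum_(i <- r) w i * expR (k i * (l * x + (1 - l) * y)) <=
  l * \sum_(i <- r) w i * expR (k i * x) + (1 - l) * \sum_(i <- r) w i * expR (k i * y).
Proof.
move=> w_ge0 l0 l1; rewrite !mulr_sumr -big_split /=.
rewrite big_seq_cond [leRHS]big_seq_cond; apply: ler_sum => i /andP[ri _].
have -> : k i * (l * x + (1 - l) * y) = l * (k i * x) + (1 - l) * (k i * y) by ring.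
by rewrite !(mulrCA _ (w i)) -mulrDr ler_wpM2l ?w_ge0 // expR_convex_comb.
Qed.

Lemma powR_expR_mul_le c x y l (u : R -> R) : 0 <= l -> l <= 1 ->
  0 < u x -> 0 < u y -> l * u x + (1 - l) * u y <= u (l * x + (1 - l) * y) ->
  (expR (c * x) * u x) `^ l * (expR (c * y) * u y) `^ (1 - l) <=
  expR (c * (l * x + (1 - l) * y)) * u (l * x + (1 - l) * y).
Proof.
move=> l0 l1 ux uy u_concave.
rewrite !powRM ?expR_ge0 ?(ltW ux) ?(ltW uy) // -!expRM mulrACA -expRD.
have -> : c * x * l + c * y * (1 - l) = c * (l * x + (1 - l) * y) by ring.
rewrite ler_wpM2l ?expR_ge0 //.
by apply: le_trans u_concave; apply: powR_weighted_AMGM.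
Qed.

End ConvexCombinations.

Lemma log_concave_on_pos (R : realType) (f : R -> R) :
  (forall x, 0 <= f x) ->
  (forall x y l : R, 0 <= l -> l <= 1 -> 0 < f x -> 0 < f y ->
     f x `^ l * f y `^ (1 - l) <= f (l * x + (1 - l) * y)) ->
  log_concave f.
Proof.
move=> f_ge0 f_pos; split=> // x y l l0 l1.
have [fx0|fx_neq0] := eqVneq (f x) 0.
  rewrite fx0; have [->|l_neq0] := eqVneq l 0.
    by rewrite powRr0 subr0 powRr1 ?mul1r ?mul0r ?add0r.
  by rewrite powR0 // mul0r.
have [fy0|fy_neq0] := eqVneq (f y) 0.
  rewrite fy0; have [->|l_neq1] := eqVneq l 1.
    by rewrite subrr powRr0 mulr1 powRr1 ?mul1r ?mul0r ?addr0.
  by rewrite powR0 ?mulr0 // subr_eq0 eq_sym.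
by apply: f_pos; rewrite // lt0r ?fx_neq0 ?fy_neq0 ?f_ge0.
Qed.

Definition gscaled {R : realType} (n : nat) (b a : nat -> R) (t : R) : R :=
  b 1%N - \sum_(2 <= i < n.+1) b i * expR ((a 1%N - a i) * t).

Lemma gfun_expR_gscaled (R : realType) (n : nat) (b a : nat -> R) (t : R) :
  gfun n b a t = expR (- a 1%N * t) * gscaled n b a t.
Proof.
rewrite /gfun /gscaled mulrBr mulr_sumr mulrC; congr (_ - _).
by apply: eq_bigr => i _; rewrite mulrCA -expRD; congr (_ * expR _); ring.
Qed.

Lemma gscaled_concave (R : realType) (n : nat) (b a : nat -> R) (x y l : R) :
  (forall i, (2 <= i <= n)%N -> 0 <= b i) -> 0 <= l -> l <= 1 ->
  l * gscaled n b a x + (1 - l) * gscaled n b a y <=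
  gscaled n b a (l * x + (1 - l) * y).
Proof.
move=> b_ge0 l0 l1.
have -> : forall S T : R, l * (b 1%N - S) + (1 - l) * (b 1%N - T) =
    b 1%N - (l * S + (1 - l) * T) by move=> S T; ring.
rewrite lerD2l lerN2 sum_expR_convex_comb // => i.
by rewrite mem_index_iota ltnS => /b_ge0.
Qed.

Theorem lemma7 (R : realType) (n : nat) (b a : nat -> R) :
  (1 <= n)%N ->
  (forall i, (1 <= i <= n)%N -> 0 < b i) ->
  (forall i, (1 <= i <= n)%N -> 0 < a i) ->
  (forall j, (2 <= j <= n)%N -> forall i, (1 <= i <= n)%N ->
      (a i - a j) ^+ 2 <= 2 * (a 1%N - a j) ^+ 2) ->
  ((forall t : R, 0 <= gind n b a t) <-> log_concave (gind n b a)).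
Proof.
move=> _ b_gt0 _ _; split; last by case.
move=> gind_ge0; apply: log_concave_on_pos => // x y l l0 l1.
rewrite /gind; case: ifPn => [x0|]; last by rewrite ltxx.
case: ifPn => [y0|]; last by rewrite ltxx.
have -> : 0 <= l * x + (1 - l) * y by rewrite addr_ge0 ?mulr_ge0 ?subr_ge0.
rewrite !gfun_expR_gscaled !pmulr_rgt0 ?expR_gt0 // => ux uy.
apply: powR_expR_mul_le => //; apply: gscaled_concave => // i /andP[i2 iN].
by rewrite ltW // b_gt0 // iN (leq_trans _ i2).
Qed.
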